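(* Let $M,N\in\mathbb{R}^{(k+n)\times(k+n)}$ be symmetric, partitioned as $N=\begin{bmatrix} N_{11} & N_{12}\\ N_{12}^\top & N_{22}\end{bmatrix}$ with $N_{11}\in\mathbb{R}^{k\times k}$, $N_{22}\in\mathbb{R}^{n\times n}$. Assume $N$ is nonsingular, $N_{11}\ge 0$ and $N_{22}<0$. Let $\mathcal{S}_N:=\{Z\in\mathbb{R}^{n\times k}\mid \begin{bmatrix} I\\ Z\end{bmatrix}^\top N\begin{bmatrix} I\\ Z\end{bmatrix}\ge 0\}$. Then $\begin{bmatrix} I\\ Z\end{bmatrix}^\top M\begin{bmatrix} I\\ Z\end{bmatrix}>0$ for all $Z\in\mathcal{S}_N$ if and only if there exists $\alpha\ge 0$ such that $M-\alpha N>0$.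
   Context: $I$ denotes the $k\times k$ identity. For symmetric matrices, $\ge 0$ means positive semidefinite and $>0$ positive definite. *)

From HB Require Import structures.
From mathcomp Require Import all_boot all_order all_algebra.
From mathcomp Require Import reals.
Set Implicit Arguments. Unset Strict Implicit. Unset Printing Implicit Defensive.
Import Order.TTheory GRing.Theory Num.Theory.
Local Open Scope ring_scope.

Definition symmx (R : realType) (m : nat) (A : 'M[R]_m) : Prop := A^T = A.

Definition psdmx (R : realType) (m : nat) (A : 'M[R]_m) : Prop :=
  symmx A /\ forall x : 'cV[R]_m, 0 <= (x^T *m A *m x) ord0 ord0.

Definition pdmx (R : realType) (m : nat) (A : 'M[R]_m) : Prop :=
  symmx A /\ forall x : 'cV[R]_m, x != 0 -> 0 < (x^T *m A *m x) ord0 ord0.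

Definition ndmx (R : realType) (m : nat) (A : 'M[R]_m) : Prop := pdmx (- A).

Definition IZ (R : realType) (k n : nat) (Z : 'M[R]_(n, k)) : 'M[R]_(k + n, k) :=
  col_mx 1%:M Z.

Definition SN (R : realType) (k n : nat) (N : 'M[R]_(k + n)) (Z : 'M[R]_(n, k)) : Prop :=
  psdmx ((IZ Z)^T *m N *m IZ Z).

From HB Require Import structures.
From mathcomp Require Import all_boot all_order all_algebra.
From mathcomp Require Import reals.
From mathcomp Require Import all_classical all_analysis.
From mathcomp Require Import ring lra.
Set Implicit Arguments. Unset Strict Implicit. Unset Printing Implicit Defensive.
Import Order.TTheory GRing.Theory Num.Theory.
Import numFieldNormedType.Exports.
Local Open Scope classical_set_scope.
Local Open Scope ring_scope.

(* Work with the quadratic form [qf A x = x^T A x] of column vectors.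
   - A strict S-lemma: if [qf A] is positive on the nonzero vectors of the
     cone [{x | 0 <= qf B x}] and B has a Slater point, then [A - a B] is
     positive definite for some [a >= 0].  The multiplier is the supremum of
     the ratios [A u / B u] over [B u < 0]; they lie below the ratios over
     [B w > 0] by a line argument (ratio_separation), and a compactness
     margin (cone_margin) makes the conclusion strict.  If B is negative
     definite instead, any large multiplier works (negdef_shift).
   - Block analysis of N: with [Z0 = - N22^-1 N21], the Schur form
     [x |-> qf N (col_mx x (Z0 x))] is positive definite (N11 >= 0, N22 < 0,
     N invertible), and every [col_mx x y] with [x != 0] and [qf N >= 0] lies
     on the graph of some [Z] in S_N (SN_through).  Hence positivity over S_N
     is positivity of M on the cone of N, and the S-lemma applies.
   The converse direction is immediate since [qf N >= 0] on the graphs. *)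

Section QuadraticForm.
Variables (R : realType) (m : nat).
Implicit Types (A B : 'M[R]_m) (x y : 'cV[R]_m).

Definition qf A x : R := (x^T *m A *m x) ord0 ord0.
Definition bil A x y : R := (x^T *m A *m y) ord0 ord0.

Lemma qfE A x : qf A x = \sum_i \sum_j x i ord0 * A i j * x j ord0.
Proof.
rewrite /qf mxE; under eq_bigr => j _ do rewrite mxE big_distrl.
rewrite exchange_big; apply: eq_bigr => i _; apply: eq_bigr => j _.
by rewrite !mxE.
Qed.

Lemma qf1 x : qf 1%:M x = \sum_i x i ord0 ^+ 2.
Proof.
by rewrite /qf mulmx1 mxE; apply: eq_bigr => i _; rewrite !mxE expr2.
Qed.

Lemma qf1_ge x i : x i ord0 ^+ 2 <= qf 1%:M x.
Proof.
rewrite qf1 (bigD1 i) //= lerDl; apply: sumr_ge0 => j _; exact: sqr_ge0.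
Qed.

Lemma qf1_ge0 x : 0 <= qf 1%:M x.
Proof. by rewrite qf1; apply: sumr_ge0 => j _; exact: sqr_ge0. Qed.

Lemma qf1_gt0 x : x != 0 -> 0 < qf 1%:M x.
Proof.
move=> xn0; rewrite lt_neqAle qf1_ge0 andbT; apply: contraNneq xn0 => x0.
apply/eqP/colP => i; rewrite mxE; apply/eqP.
by rewrite -sqrf_eq0 eq_le sqr_ge0 andbT x0 qf1_ge.
Qed.

Lemma qf0 A : qf A 0 = 0.
Proof. by rewrite /qf trmx0 !mul0mx mxE. Qed.

Lemma qfZ A c x : qf A (c *: x) = c ^+ 2 * qf A x.
Proof.
by rewrite /qf -scalemxAr [(c *: x)^T]linearZ /= -!scalemxAl scalerA mxE expr2.
Qed.

Lemma qfN A x : qf A (- x) = qf A x.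
Proof. by rewrite -scaleN1r qfZ sqrrN expr1n mul1r. Qed.

Lemma qfD A x y : qf A (x + y) = qf A x + qf A y + bil A x y + bil A y x.
Proof.
by rewrite /qf /bil [(x + y)^T]linearD /= !(mulmxDl, mulmxDr) !mxE; ring.
Qed.

Lemma bilC A x y : A^T = A -> bil A y x = bil A x y.
Proof.
move=> AT; rewrite /bil.
have <- : (y^T *m A *m x)^T = x^T *m A *m y by rewrite !trmx_mul trmxK AT mulmxA.
by rewrite [RHS]mxE.
Qed.

Lemma bilZl A c x y : bil A (c *: x) y = c * bil A x y.
Proof. by rewrite /bil linearZ /= -!scalemxAl mxE. Qed.

Lemma bilZr A c x y : bil A x (c *: y) = c * bil A x y.
Proof. by rewrite /bil -scalemxAr mxE. Qed.

Lemma qfBm A B x : qf (A - B) x = qf A x - qf B x.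
Proof. by rewrite /qf mulmxBr mulmxBl mxE [X in _ + X]mxE. Qed.

Lemma qfZm c A x : qf (c *: A) x = c * qf A x.
Proof. by rewrite /qf -scalemxAr -scalemxAl mxE. Qed.

Lemma qfNm A x : qf (- A) x = - qf A x.
Proof. by rewrite /qf mulmxN mulNmx mxE. Qed.

Lemma qf0m x : qf 0 x = 0.
Proof. by rewrite /qf mulmx0 mul0mx mxE. Qed.

Lemma psdmxE A : psdmx A <-> A^T = A /\ forall x, 0 <= qf A x.
Proof. by []. Qed.

Lemma pdmxE A : pdmx A <-> A^T = A /\ forall x, x != 0 -> 0 < qf A x.
Proof. by []. Qed.

End QuadraticForm.

Lemma qf_congr (R : realType) p m (X : 'M[R]_(p, m)) (A : 'M[R]_p)
    (x : 'cV[R]_m) :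
  qf (X^T *m A *m X) x = qf A (X *m x).
Proof. by rewrite /qf trmx_mul !mulmxA. Qed.

Lemma symmx_congr (R : realType) p m (X : 'M[R]_(p, m)) (A : 'M[R]_p) :
  A^T = A -> (X^T *m A *m X)^T = X^T *m A *m X.
Proof. by move=> AT; rewrite !trmx_mul trmxK AT mulmxA. Qed.

Lemma sum_continuous (R : realType) (T : topologicalType) (I : Type) (s : seq I)
    (F : I -> T -> R) :
  (forall i, continuous (F i)) -> continuous (fun t => \sum_(i <- s) F i t).
Proof.
move=> HF t; elim: s => [|i s IH].
  under eq_fun do rewrite big_nil; exact: cst_continuous.
under eq_fun do rewrite big_cons; exact: (continuousD (HF i t) IH).
Qed.

Section Compactness.
Variables (R : realType) (m : nat).
Implicit Types (A B : 'M[R]_m) (x : 'cV[R]_m).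

(* The compactness results of the library are stated for row vectors, so
   continuity is stated for the form read through transposition. *)
Lemma qf_continuous A : continuous (fun v : 'rV[R]_m => qf A v^T).
Proof.
have qfT (v : 'rV[R]_m) :
    qf A v^T = \sum_i \sum_j v ord0 i * A i j * v ord0 j.
  by rewrite qfE; apply: eq_bigr => i _; apply: eq_bigr => j _; rewrite !mxE.
under eq_fun do rewrite qfT.
apply: sum_continuous => i; apply: sum_continuous => j v.
have ci := @coord_continuous R 1 m ord0 i v.
have cj := @coord_continuous R 1 m ord0 j v.
exact: (continuousM (continuousM ci (@cst_continuous _ R (A i j) v)) cj).
Qed.

(* A quadratic form attains its minimum on the unit sphere intersected with
   the (nontrivial) cone [{x | 0 <= qf B x}]; by homogeneity the minimum
   bounds the form from below on the whole cone. *)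
Lemma qf_cone_min A B w : w != 0 -> 0 <= qf B w ->
  exists x0, [/\ qf 1%:M x0 = 1, 0 <= qf B x0 &
    forall x, 0 <= qf B x -> qf A x0 * qf 1%:M x <= qf A x].
Proof.
move=> wn0 Bw.
pose K := [set v : 'rV[R]_m | qf 1%:M v^T = 1 /\ 0 <= qf B v^T].
have normalize x : x != 0 -> 0 <= qf B x ->
    K ((Num.sqrt (qf 1%:M x))^-1 *: x)^T.
  move=> xn0 Bx; have x_gt0 := qf1_gt0 xn0.
  rewrite /K /= !trmxK !qfZ exprVn (sqr_sqrtr (ltW x_gt0)) mulVf ?gt_eqF //.
  by split => //; rewrite mulr_ge0 // invr_ge0 ltW.
have K0 : K !=set0.
  by exists ((Num.sqrt (qf 1%:M w))^-1 *: w)^T; exact: normalize.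
have Kcompact : compact K.
  apply: bounded_closed_compact.
    exists 1; split => // r r1 v [v1 _].
    rewrite /Num.norm /= mx_normrE; apply: bigmax_le => [|ij _]; first lra.
    have := qf1_ge v^T ij.2; rewrite v1 mxE (ord1 ij.1) => vij.
    have : `|v ord0 ij.2| <= 1.
      by rewrite -(@ler_pXn2r _ 2) ?nnegrE // expr1n real_normK ?num_real.
    lra.
  apply: closedI.
    apply: (@preimage_closed _ _ (fun v : 'rV[R]_m => qf 1%:M v^T) [set 1]).
      by move=> v _; apply: qf_continuous.
    exact: closed_eq.
  apply: (@preimage_closed _ _ (fun v : 'rV[R]_m => qf B v^T) [set r | 0 <= r]).
    by move=> v _; apply: qf_continuous.
  exact: closed_ge.
have [v0 /set_mem [v01 v0B] v0min] :=
  EVT_min_rV K0 Kcompact (continuous_subspaceT (@qf_continuous A)).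
exists v0^T; split => // x Bx.
have [->|xn0] := eqVneq x 0; first by rewrite !qf0 mulr0.
have x_gt0 := qf1_gt0 xn0.
have := v0min _ (mem_set (normalize x xn0 Bx)).
rewrite trmxK qfZ exprVn (sqr_sqrtr (ltW x_gt0)) => h.
by rewrite -ler_pdivlMr // mulrC.
Qed.

End Compactness.

(* A concave quadratic that is positive at 0 has a root of each sign; we pick
   one whose sign is opposite to that of a prescribed number [p]. *)
Lemma quadratic_root_sign (R : realType) (a b c p : R) : a < 0 -> 0 < c ->
  exists s, a * s ^+ 2 + b * s + c = 0 /\ s * p <= 0.
Proof.
move=> a_lt0 c_gt0; pose D := b ^+ 2 - 4 * a * c.
have D_gt0 : 0 < D by rewrite /D; have := sqr_ge0 b; nra.
pose S := Num.sqrt D.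
have S2 : S ^+ 2 = D by rewrite sqr_sqrtr // ltW.
have [bS1 bS2] : - S < b /\ b < S.
  have : `|b| < S by rewrite /S -sqrtr_sqr ltr_sqrt // /D; nra.
  by rewrite ltr_norml => /andP[].
have root e : e ^+ 2 = D ->
    a * ((- b + e) / (2 * a)) ^+ 2 + b * ((- b + e) / (2 * a)) + c = 0.
  move=> e2; set r := (- b + e) / (2 * a).
  have -> : a * r ^+ 2 + b * r + c = (e ^+ 2 - D) / (4 * a).
    by rewrite /r /D; field; rewrite lt_eqF.
  by rewrite e2 subrr mul0r.
have [p_ge0|p_lt0] := leP 0 p.
  have r_lt0 : (- b + S) / (2 * a) < 0 by rewrite pmulr_rlt0 ?invr_lt0; lra.
  by exists ((- b + S) / (2 * a)); split; [exact: root | nra].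
have r_gt0 : 0 < (- b + - S) / (2 * a) by rewrite nmulr_rgt0 ?invr_lt0; lra.
by exists ((- b + - S) / (2 * a)); split; [apply: root; rewrite sqrrN | nra].
Qed.

Section SLemma.
Variables (R : realType) (m : nat) (A B : 'M[R]_m).
Implicit Types (x u w : 'cV[R]_m).

Lemma qf_line (X : 'M[R]_m) w u s :
  qf X (w + s *: u) = qf X u * s ^+ 2 + (bil X w u + bil X u w) * s + qf X w.
Proof. by rewrite qfD qfZ bilZl bilZr; ring. Qed.

(* Otherwise, with [t = A w / B w], the
   form [A - t B] vanishes at [w] and is negative at [u], and a suitable point
   [w + s u] of the line through them is a nonzero zero of B where A <= 0. *)
Lemma ratio_separation u w :
  (forall x, x != 0 -> qf B x = 0 -> 0 < qf A x) ->
  qf B u < 0 -> 0 < qf B w -> qf A w * qf B u <= qf A u * qf B w.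
Proof.
move=> Apos Bu Bw; rewrite leNgt; apply/negP => ratio_lt.
pose t := qf A w / qf B w; pose C := A - t *: B.
have Cw : qf C w = 0 by rewrite qfBm qfZm divfK ?gt_eqF // subrr.
have Cu : qf C u < 0.
  by rewrite qfBm qfZm subr_lt0 /t mulrAC ltr_pdivlMr.
have [s [Bs sC]] := quadratic_root_sign (bil B w u + bil B u w)
  (bil C w u + bil C u w) Bu Bw.
pose v := w + s *: u.
have Bv : qf B v = 0 by rewrite qf_line -Bs; ring.
have Cv : qf C v <= 0.
  rewrite qf_line Cw addr0 mulrC -addrC.
  have : qf C u * s ^+ 2 <= 0 by rewrite mulrC mulr_ge0_le0 ?sqr_ge0 ?ltW.
  lra.
have Av : qf A v = qf C v by rewrite qfBm qfZm Bv mulr0 subr0.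
have vn0 : v != 0.
  apply: contraTneq Bw => /eqP; rewrite addr_eq0 => /eqP ->.
  by rewrite qfN qfZ -leNgt mulr_ge0_le0 ?sqr_ge0 ?ltW.
by have := Apos v vn0 Bv; lra.
Qed.

Hypothesis A_cone_pos : forall x, x != 0 -> 0 <= qf B x -> 0 < qf A x.
Hypothesis slater : exists w, 0 < qf B w.

(* The sup of the ratios [A u / B u] over [B u < 0] (or 0) is a multiplier
   making [A - a B] positive semidefinite. *)
Lemma slemma_nonstrict : exists a, 0 <= a /\ forall x, 0 <= qf (A - a *: B) x.
Proof.
have [w0 Bw0] := slater.
have Apos0 x : x != 0 -> qf B x = 0 -> 0 < qf A x.
  by move=> xn0 Bx; apply: A_cone_pos => //; rewrite Bx.
have ne0 x : 0 < qf B x -> x != 0 by apply: contraTneq => ->; rewrite qf0 ltxx.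
pose E := [set r : R | r = 0 \/ exists2 u, qf B u < 0 & r = qf A u / qf B u].
have E_ub w : 0 < qf B w -> ubound E (qf A w / qf B w).
  move=> Bw r [->|[u Bu ->]].
    by rewrite divr_ge0 ?ltW // A_cone_pos ?ltW ?ne0.
  by rewrite ler_ndivrMr // mulrAC ler_pdivrMr //; exact: ratio_separation.
have E_sup : has_sup E.
  by split; [exists 0; left | exists (qf A w0 / qf B w0); exact: E_ub].
exists (sup E); split; first by apply: sup_upper_bound => //; left.
move=> x; rewrite qfBm qfZm subr_ge0.
have [Bx|Bx|Bx] := ltgtP (qf B x) 0.
- have : qf A x / qf B x <= sup E.
    by apply: sup_upper_bound => //; right; exists x.
  by rewrite ler_ndivrMr.
- have : sup E <= qf A x / qf B x.
    by apply: ge_sup => //; [exists 0; left | exact: E_ub].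
  by rewrite ler_pdivlMr.
- have [->|xn0] := eqVneq x 0; first by rewrite !qf0 mulr0.
  by rewrite Bx mulr0 ltW // Apos0.
Qed.

Lemma cone_margin :
  exists2 e, 0 < e & forall x, 0 <= qf B x -> e * qf 1%:M x <= qf A x.
Proof.
have [w Bw] := slater.
have wn0 : w != 0 by apply: contraTneq Bw => ->; rewrite qf0 ltxx.
have [x0 [x01 Bx0 x0min]] := qf_cone_min A wn0 (ltW Bw).
exists (qf A x0) => //; apply: A_cone_pos => //.
by apply: contra_eqN x01 => /eqP ->; rewrite qf0 eq_sym oner_eq0.
Qed.

End SLemma.

(* The margin turns the nonstrict multiplier of
   [A - (e/2) I] into a strict one for A. *)
Lemma slemma (R : realType) m (A B : 'M[R]_m) :
  (forall x, x != 0 -> 0 <= qf B x -> 0 < qf A x) -> (exists w, 0 < qf B w) ->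
  exists a, 0 <= a /\ forall x, x != 0 -> 0 < qf (A - a *: B) x.
Proof.
move=> Apos slater; have [e e_gt0 Ae] := cone_margin Apos slater.
pose A' := A - (e / 2) *: 1%:M.
have A'E x : qf A' x = qf A x - e / 2 * qf 1%:M x by rewrite qfBm qfZm.
have A'pos x : x != 0 -> 0 <= qf B x -> 0 < qf A' x.
  move=> xn0 Bx; have := Ae x Bx; have := qf1_gt0 xn0; rewrite A'E; nra.
have [a [a_ge0 A'a]] := slemma_nonstrict A'pos slater.
exists a; split => // x xn0; have := A'a x; rewrite !qfBm !qfZm.
have := qf1_gt0 xn0; nra.
Qed.

Lemma negdef_shift (R : realType) m (A B : 'M[R]_m) :
  (forall x, x != 0 -> qf B x < 0) ->
  exists a, 0 <= a /\ forall x, x != 0 -> 0 < qf (A - a *: B) x.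
Proof.
move=> Bneg; have [[w wn0]|no_vec] := pselect (exists w : 'cV[R]_m, w != 0);
  last by exists 0; split => // x xn0; case: no_vec; exists x.
have w_in_cone : 0 <= qf (0 : 'M[R]_m) w by rewrite qf0m.
have whole (X : 'M[R]_m) := qf_cone_min X wn0 w_in_cone.
have [x0 [_ _ x0min]] := whole A; have [x1 [x11 _ x1min]] := whole (- B).
pose mu := qf A x0; pose q := qf (- B) x1.
have q_gt0 : 0 < q.
  rewrite /q qfNm oppr_gt0 Bneg //.
  by apply: contra_eqN x11 => /eqP ->; rewrite qf0 eq_sym oner_eq0.
exists ((1 + `|mu|) / q); split; first by rewrite divr_ge0 ?ltW // addr_ge0.
move=> x xn0; have s_gt0 := qf1_gt0 xn0.
have Ax : mu * qf 1%:M x <= qf A x by apply: x0min; rewrite qf0m.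
have Bx : q * qf 1%:M x <= - qf B x by rewrite -qfNm; apply: x1min; rewrite qf0m.
rewrite qfBm qfZm; set s := qf 1%:M x in s_gt0 Ax Bx *.
have : (1 + `|mu|) / q * (q * s) <= (1 + `|mu|) / q * - qf B x.
  by rewrite ler_wpM2l // divr_ge0 ?ltW // addr_ge0.
have -> : (1 + `|mu|) / q * (q * s) = (1 + `|mu|) * s by field; rewrite gt_eqF.
have : - `|mu| <= mu by apply: lerNnormlW.
nra.
Qed.

Lemma discriminant_le (R : realType) (a b c : R) : 0 <= c ->
  (forall t, 0 <= a + 2 * b * t + c * t ^+ 2) -> b ^+ 2 <= a * c.
Proof.
move=> c_ge0 nonneg; have [c_gt0|c_le0] := ltP 0 c.
  have := nonneg (- b / c).
  have -> : a + 2 * b * (- b / c) + c * (- b / c) ^+ 2 = a - b ^+ 2 / c.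
    by field; rewrite gt_eqF.
  by rewrite subr_ge0 ler_pdivrMr.
have c0 : c = 0 by apply/eqP; rewrite eq_le c_le0 c_ge0.
have [b0|bn0] := eqVneq b 0; first by rewrite b0 c0 expr0n mulr0.
have := nonneg (- (a + 1) / (2 * b)).
have -> : a + 2 * b * (- (a + 1) / (2 * b)) + c * (- (a + 1) / (2 * b)) ^+ 2 = -1.
  by rewrite c0; field.
by rewrite oppr_ge0 ler10.
Qed.

Section PositiveSemidefinite.
Variables (R : realType) (m : nat) (X : 'M[R]_m).
Hypotheses (X_sym : X^T = X) (X_psd : forall x, 0 <= qf X x).

Lemma cauchy_schwarz u x : bil X u x ^+ 2 <= qf X u * qf X x.
Proof.
apply: discriminant_le (X_psd x) _ => t.
have -> : qf X u + 2 * bil X u x * t + qf X x * t ^+ 2 = qf X (u + t *: x).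
  by rewrite qfD qfZ bilZl bilZr (@bilC _ _ X x u X_sym); ring.
exact: X_psd.
Qed.

Lemma psd_kernel x : qf X x = 0 -> X *m x = 0.
Proof.
move=> qx; apply/eqP; apply: contraT => Xxn0.
have := cauchy_schwarz (X *m x) x; rewrite qx mulr0.
have -> : bil X (X *m x) x = qf 1%:M (X *m x) by rewrite /bil /qf -mulmxA mulmx1.
by rewrite leNgt exprn_gt0 ?qf1_gt0.
Qed.

End PositiveSemidefinite.

Lemma IZ_mul (R : realType) k n (Z : 'M[R]_(n, k)) (u : 'cV[R]_k) :
  IZ Z *m u = col_mx u (Z *m u).
Proof. by rewrite /IZ mul_col_mx mul1mx. Qed.

Section Block.
Variables (R : realType) (k n : nat) (N : 'M[R]_(k + n)).
Hypothesis N_sym : N^T = N.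
Local Notation N11 := (ulsubmx N).
Local Notation N12 := (ursubmx N).
Local Notation N21 := (dlsubmx N).
Local Notation N22 := (drsubmx N).
Implicit Types (x u : 'cV[R]_k) (y d : 'cV[R]_n).

Lemma mulN_col x y :
  N *m col_mx x y = col_mx (N11 *m x + N12 *m y) (N21 *m x + N22 *m y).
Proof. by rewrite -{1}[N]submxK mul_block_col. Qed.

Lemma qf_col0 x : qf N (col_mx x 0) = qf N11 x.
Proof.
rewrite /qf -mulmxA mulN_col !mulmx0 !addr0 tr_col_mx trmx0 mul_row_col.
by rewrite mul0mx addr0 mulmxA.
Qed.

Lemma qf_0col y : qf N (col_mx 0 y) = qf N22 y.
Proof.
rewrite /qf -mulmxA mulN_col !mulmx0 !add0r tr_col_mx trmx0 mul_row_col.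
by rewrite mul0mx add0r mulmxA.
Qed.

Hypotheses (N11_psd : forall x, 0 <= qf N11 x)
  (N22_neg : forall y, y != 0 -> qf N22 y < 0) (N_unit : N \in unitmx).

Lemma N22_unit : N22 \in unitmx.
Proof.
rewrite unitmxE unitfE; apply/negP => /det0P[v vn0 vN].
have := @N22_neg v^T; rewrite trmx_eq0 => /(_ vn0).
by rewrite /qf trmxK vN mul0mx mxE ltxx.
Qed.

(* [Z0 x] is the critical point of the concave map [y |-> qf N (col_mx x y)]:
   [col_mx x (Z0 x)] is N-orthogonal to every [col_mx 0 d], and the value
   there is the Schur complement form [N11 - N12 N22^-1 N21]. *)
Let Z0 := - (invmx N22 *m N21).

Lemma N22_Z0 : N22 *m Z0 = - N21.
Proof. by rewrite mulmxN mulKVmx // N22_unit. Qed.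

Lemma bil_orth x d : bil N (col_mx 0 d) (col_mx x (Z0 *m x)) = 0.
Proof.
rewrite /bil -mulmxA mulN_col [N22 *m _]mulmxA N22_Z0 [- N21 *m x]mulNmx addrN.
rewrite tr_col_mx trmx0 mul_row_col.
by rewrite mul0mx add0r mulmx0 mxE.
Qed.

(* Completing the square in the second block around [Z0 x]. *)
Lemma qf_split x d :
  qf N (col_mx x (Z0 *m x + d)) = qf N (col_mx x (Z0 *m x)) + qf N22 d.
Proof.
have -> : col_mx x (Z0 *m x + d) = col_mx x (Z0 *m x) + col_mx 0 d.
  by rewrite add_col_mx addr0.
rewrite qfD qf_0col (@bilC _ _ N (col_mx 0 d) _ N_sym) bil_orth.
by rewrite !addr0.
Qed.

Lemma qf_schur x : qf N (col_mx x (Z0 *m x)) = qf N11 x - qf N22 (Z0 *m x).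
Proof.
by have := qf_split x (- (Z0 *m x)); rewrite addrN qf_col0 qfN => ->; ring.
Qed.

Lemma qf_N22_le0 y : qf N22 y <= 0.
Proof. by have [->|/N22_neg/ltW//] := eqVneq y 0; rewrite qf0. Qed.

Lemma schur_ge0 x : 0 <= qf N (col_mx x (Z0 *m x)).
Proof. by rewrite qf_schur subr_ge0 (le_trans (qf_N22_le0 _)). Qed.

(* Strictness uses the invertibility of N: a zero of the Schur form gives a
   kernel vector [col_mx x 0] of N. *)
Lemma schur_gt0 x : x != 0 -> 0 < qf N (col_mx x (Z0 *m x)).
Proof.
move=> xn0; rewrite lt_neqAle schur_ge0 andbT; apply: contraNneq xn0 => schur0.
have := qf_N22_le0 (Z0 *m x); have := N11_psd x.
move: schur0; rewrite qf_schur => schur0 N11x N22x.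
have N11x0 : qf N11 x = 0 by lra.
have N22x0 : qf N22 (Z0 *m x) = 0 by lra.
have Z0x : Z0 *m x = 0.
  by apply/eqP; apply: contraT => /N22_neg; rewrite N22x0 ltxx.
have N21x : N21 *m x = 0.
  by rewrite -[N21]opprK -N22_Z0 mulNmx -mulmxA Z0x mulmx0 oppr0.
have N11x_ker : N11 *m x = 0 by apply: psd_kernel => //; rewrite trmx_ulsub N_sym.
have ker : N *m col_mx x 0 = 0.
  by rewrite mulN_col N11x_ker N21x !mulmx0 !addr0 col_mx0.
have := mulKmx N_unit (col_mx x 0); rewrite ker mulmx0 => /esym.
by rewrite -col_mx0 => /eq_col_mx[-> _].
Qed.

(* Every vector [col_mx x y] with [x != 0] of the cone [{v | 0 <= qf N v}]
   lies on the graph of some [Z] in [S_N]: starting from [Z0], a rank-one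
   correction sends x to y, and the Cauchy-Schwarz inequality for the Schur
   form keeps [I; Z]^T N [I; Z] positive semidefinite. *)
Lemma SN_through x y : x != 0 -> 0 <= qf N (col_mx x y) ->
  exists2 Z : 'M[R]_(n, k), Z *m x = y & SN N Z.
Proof.
move=> xn0 Nxy; pose P := (IZ Z0)^T *m N *m IZ Z0.
have qfP u : qf P u = qf N (col_mx u (Z0 *m u)) by rewrite qf_congr IZ_mul.
have P_sym : P^T = P := symmx_congr _ N_sym.
have P_psd u : 0 <= qf P u by rewrite qfP schur_ge0.
pose c := qf P x; have c_gt0 : 0 < c by rewrite /c qfP schur_gt0.
pose d := y - Z0 *m x.
have cd : 0 <= c + qf N22 d by rewrite /c qfP -qf_split /d addrC subrK.
pose Z := Z0 + c^-1 *: (d *m (x^T *m P)).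
have Zu u : Z *m u = Z0 *m u + (c^-1 * bil P x u) *: d.
  rewrite mulmxDl -scalemxAl -mulmxA (mx11_scalar (x^T *m P *m u)).
  by rewrite mul_mx_scalar scalerA.
exists Z.
  by rewrite Zu [bil P x x]/(qf P x) -/c mulVf ?gt_eqF // scale1r addrC subrK.
apply/psdmxE; split=> [|u]; first exact: symmx_congr.
rewrite qf_congr IZ_mul Zu qf_split -qfP qfZ.
have := cauchy_schwarz P_sym P_psd x u; rewrite -/c; set b := bil P x u => CS.
have : (c^-1 * b) ^+ 2 * - c <= (c^-1 * b) ^+ 2 * qf N22 d.
  by rewrite ler_wpM2l ?sqr_ge0 //; lra.
have -> : (c^-1 * b) ^+ 2 * - c = - (b ^+ 2 / c) by field; rewrite gt_eqF.
have : b ^+ 2 / c <= qf P u by rewrite ler_pdivrMr // mulrC.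
lra.
Qed.

Lemma slater_point : (exists x : 'cV[R]_k, x != 0) -> exists v, 0 < qf N v.
Proof. by move=> [x xn0]; exists (col_mx x (Z0 *m x)); exact: schur_gt0. Qed.

Lemma negdef_trivial_top :
  (forall x : 'cV[R]_k, x = 0) -> forall v, v != 0 -> qf N v < 0.
Proof.
move=> top0 v; rewrite -[v]vsubmxK (top0 (usubmx v)) qf_0col => vn0.
by apply: N22_neg; apply: contraNneq vn0 => ->; rewrite col_mx0.
Qed.

Lemma SN_positivity_on_cone (M : 'M[R]_(k + n)) :
  (forall Z, SN N Z -> pdmx ((IZ Z)^T *m M *m IZ Z)) ->
  forall v, v != 0 -> 0 <= qf N v -> 0 < qf M v.
Proof.
move=> Mpos v; rewrite -[v]vsubmxK; set x := usubmx v; set y := dsubmx v.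
move=> vn0 Nv; have [x0|xn0] := eqVneq x 0.
  move: vn0 Nv; rewrite x0 qf_0col => vn0; rewrite leNgt N22_neg //.
  by apply: contraNneq vn0 => ->; rewrite col_mx0.
have [Z <- /Mpos/pdmxE[_ Mpd]] := SN_through xn0 Nv.
by rewrite -IZ_mul -qf_congr; exact: Mpd.
Qed.

End Block.

Lemma multiplier_of_SN_positivity (R : realType) k n (M N : 'M[R]_(k + n)) :
  symmx M -> symmx N -> N \in unitmx ->
  psdmx (ulsubmx N) -> ndmx (drsubmx N) ->
  (forall Z : 'M[R]_(n, k), SN N Z -> pdmx ((IZ Z)^T *m M *m IZ Z)) ->
  exists a, 0 <= a /\ pdmx (M - a *: N).
Proof.
move=> M_sym N_sym N_unit /psdmxE[_ N11_psd] /pdmxE[_ N22_pd] Mpos.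
have N22_neg y : y != 0 -> qf (drsubmx N) y < 0.
  by move=> yn0; rewrite -oppr_gt0 -qfNm N22_pd.
have M_cone := SN_positivity_on_cone N_sym N11_psd N22_neg N_unit Mpos.
have [a [a_ge0 Mpd]] :
    exists a, 0 <= a /\ forall v, v != 0 -> 0 < qf (M - a *: N) v.
  have [top|no_top] := pselect (exists x : 'cV[R]_k, x != 0).
    exact: slemma M_cone (slater_point N_sym N11_psd N22_neg N_unit top).
  apply: negdef_shift (negdef_trivial_top N22_neg _) => x.
  by apply/eqP; apply: contraT => xn0; case: no_top; exists x.
exists a; split => //; apply/pdmxE; split => //.
by rewrite linearB linearZ /= M_sym N_sym.
Qed.

(* Sufficiency: on [S_N] the form of N is nonnegative, so that of M
   dominates the positive definite form of [M - a N]. *)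
Lemma SN_positivity_of_multiplier (R : realType) k n (M N : 'M[R]_(k + n)) a :
  symmx M -> 0 <= a -> pdmx (M - a *: N) ->
  forall Z : 'M[R]_(n, k), SN N Z -> pdmx ((IZ Z)^T *m M *m IZ Z).
Proof.
move=> M_sym a_ge0 /pdmxE[_ Mpd] Z /psdmxE[_ NZ].
apply/pdmxE; split=> [|u un0]; first exact: symmx_congr.
have v_n0 : IZ Z *m u != 0.
  by rewrite IZ_mul; apply: contraNneq un0; rewrite -col_mx0 => /eq_col_mx[-> _].
have := Mpd _ v_n0; have := NZ u; rewrite !qf_congr qfBm qfZm => Nv.
have : 0 <= a * qf N (IZ Z *m u) by rewrite mulr_ge0.
lra.
Qed.

Unset Implicit Arguments.

Theorem corollary2 (R : realType) (k n : nat) (M N : 'M[R]_(k + n)) :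
  symmx M -> symmx N ->
  N \in unitmx ->
  psdmx (ulsubmx N) ->
  ndmx (drsubmx N) ->
  ((forall Z : 'M[R]_(n, k), SN N Z -> pdmx ((IZ Z)^T *m M *m IZ Z)) <->
   (exists alpha : R, 0 <= alpha /\ pdmx (M - alpha *: N))).
Proof.
move=> M_sym N_sym N_unit N11_psd N22_nd; split.
  exact: multiplier_of_SN_positivity.
by move=> [a [a_ge0 Mpd]]; exact: SN_positivity_of_multiplier Mpd.
Qed.
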